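(* Every function $g$ in the Zygmund class $\Lambda_*$ has locally finite $\Phi_q$-variation for every $q>1/2$.
   Context: The Zygmund class $\Lambda_*$ consists of continuous $g\colon\mathbb{R}\to\mathbb{R}$ for which there is $M>0$ with $|g(x+h)-2g(x)+g(x-h)|\le 2Mh$ for all $x\in\mathbb{R}$, $h>0$. For $q>0$, $\Phi_q\colon[0,\infty)\to[0,\infty)$ is any convex increasing function with $\Phi_q(t)=t/(\log(1/t))^q$ for small $t>0$. A function $v\colon\mathbb{R}\to\mathbb{R}$ has locally finite $\Phi$-variation if for every bounded interval $[a,b]$, $\sup\sum_{j=1}^N\Phi(|v(x_j)-v(x_{j-1})|)<\infty$ over all partitions $a=x_0<\dots<x_N=b$, $N\ge1$. *)

From Stdlib Require Import Reals Lra.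
Open Scope R_scope.

Definition zygmund (g : R -> R) : Prop :=
  continuity g /\
  exists M : R, M > 0 /\
    forall x h : R, h > 0 ->
      Rabs (g (x + h) - 2 * g x + g (x - h)) <= 2 * M * h.

Definition is_Phi_q (q : R) (Phi : R -> R) : Prop :=
  (forall t, 0 <= t -> 0 <= Phi t) /\
  (forall s t, 0 <= s -> s <= t -> Phi s <= Phi t) /\
  (forall x y l, 0 <= x -> 0 <= y -> 0 <= l <= 1 ->
     Phi (l * x + (1 - l) * y) <= l * Phi x + (1 - l) * Phi y) /\
  (exists delta, 0 < delta < 1 /\
     forall t, 0 < t < delta -> Phi t = t / Rpower (ln (1 / t)) q).

Definition is_partition (a b : R) (N : nat) (x : nat -> R) : Prop :=
  (1 <= N)%nat /\ x 0%nat = a /\ x N = b /\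
  (forall j, (j < N)%nat -> x j < x (S j)).

Definition Phi_var_sum (Phi v : R -> R) (N : nat) (x : nat -> R) : R :=
  sum_f_R0 (fun j => Phi (Rabs (v (x (S j)) - v (x j)))) (N - 1).

Definition loc_finite_Phi_variation (Phi v : R -> R) : Prop :=
  forall a b : R, a < b ->
    exists C : R, forall (N : nat) (x : nat -> R),
      is_partition a b N x -> Phi_var_sum Phi v N x <= C.

From Stdlib Require Import Reals Lra Lia Psatz ZArith List.
Import ListNotations.
Open Scope R_scope.

(* Fix [a < b] and a dyadic grid of [[a, b]] with [2^K] steps.  For the dyadic cell
   [(e, c)] (grid indices [c 2^e .. (c+1) 2^e]) let [s(e, c)] be the slope of [g] over it.
   The Zygmund condition says that the slopes of two adjacent cells differ by at most
   [2M]; consequently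
   (1) every increment of [g] between grid points [al < be] is bounded by
       [10 |cell| (|s(e, c)| + 14 M)] for a cell [(e, c)] inside [[al, be]]
       (the "dyadic node" of the increment), and
   (2) [|s(e, c)| <= |s(K, 0)| + M (K - e)].
   Since [q > 1/2], a computation with [Phi(t) = t / log(1/t)^q] turns (1) and (2) into
   [Phi(increment) <= |cell| (C1 + C2 E(K - e + 1, s(e, c)))], where the "heat weight"
   [E(tau, s) = exp (mu s^2 / tau - lam ln tau)] is a supermartingale along the dyadic tree.
   Hence the weight of a cell is superadditive, and the weights of the pairwise disjoint
   nodes of a grid partition sum to at most the weight of the root cell: this bounds the
   [Phi]-variation along grid partitions uniformly in [K].  Finally an arbitrary partition
   is snapped to a fine grid using continuity of [g] and convexity of [Phi]. *)

Lemma exp_le_mono (x y : R) : x <= y -> exp x <= exp y.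
Proof.
  intros Hxy; destruct (Req_dec x y) as [->|Hne]; [lra|].
  left; apply exp_increasing; lra.
Qed.

Lemma ln_le_mono (x y : R) : 0 < x -> x <= y -> ln x <= ln y.
Proof.
  intros Hx Hxy; destruct (Req_dec x y) as [->|Hne]; [lra|].
  left; apply ln_increasing; lra.
Qed.

Lemma ln_le_pred (x : R) : 0 < x -> ln x <= x - 1.
Proof. intros Hx; pose proof (exp_ineq1_le (ln x)) as H; rewrite exp_ln in H; lra. Qed.

Lemma Rdiv_nonneg (a b : R) : 0 <= a -> 0 < b -> 0 <= a / b.
Proof. intros Ha Hb; apply Rmult_le_pos; [lra | left; apply Rinv_0_lt_compat; lra]. Qed.

Lemma exp_mul_one_sub_le (z : R) : z < 1 -> exp z * (1 - z) <= 1.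
Proof.
  intros Hz; pose proof (exp_ineq1_le (- z)) as H; rewrite exp_Ropp in H.
  pose proof (exp_pos z) as Hp.
  apply (Rmult_le_compat_l (exp z)) in H; [|lra].
  rewrite Rinv_r in H by lra; nra.
Qed.

Lemma cosh_le_exp_sq (z : R) : exp z + exp (- z) <= 2 * exp (2 * (z * z)).
Proof.
  destruct (Rle_or_lt (z * z) (1 / 2)) as [Hsmall | Hlarge].
  - pose proof (exp_mul_one_sub_le z ltac:(nra)) as Hp.
    pose proof (exp_mul_one_sub_le (- z) ltac:(nra)) as Hm.
    pose proof (exp_ineq1_le (2 * (z * z))) as Hsq.
    assert (Hsum : exp z + exp (- z) <= 2 / (1 - z * z)).
    { apply (Rmult_le_reg_r (1 - z * z)); [nra|].
      unfold Rdiv; rewrite Rmult_assoc, Rinv_l by nra.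
      assert (0 < 1 + z /\ 0 < 1 - z) as [Hzp Hzm] by nra.
      pose proof (Rmult_le_compat_r (1 + z) _ _ (Rlt_le _ _ Hzp) Hp).
      pose proof (Rmult_le_compat_r (1 - z) _ _ (Rlt_le _ _ Hzm) Hm).
      nra. }
    assert (2 / (1 - z * z) <= 2 * (1 + 2 * (z * z))).
    { apply (Rmult_le_reg_r (1 - z * z)); [nra|].
      unfold Rdiv; rewrite Rmult_assoc, Rinv_l by nra. nra. }
    lra.
  - pose proof (exp_le_mono z (2 * (z * z)) ltac:(nra)).
    pose proof (exp_le_mono (- z) (2 * (z * z)) ltac:(nra)).
    lra.
Qed.

Lemma sq_half_le_exp (z : R) : 0 <= z -> (z / 2) * (z / 2) <= exp z.
Proof.
  intros Hz; replace (exp z) with (exp (z / 2) * exp (z / 2))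
    by (rewrite <- exp_plus; f_equal; field).
  pose proof (exp_ineq1_le (z / 2)); apply Rmult_le_compat; lra.
Qed.

Lemma pow2_exp_ln (n : nat) : 2 ^ n = exp (INR n * ln 2).
Proof. rewrite <- ln_pow, exp_ln by (try apply pow_lt; lra); reflexivity. Qed.

Lemma Rpower_ge1 (t q : R) : 1 <= t -> 0 <= q -> 1 <= Rpower t q.
Proof.
  intros Ht Hq; unfold Rpower; rewrite <- exp_0; apply exp_le_mono.
  pose proof (ln_le_mono 1 t ltac:(lra) Ht); rewrite ln_1 in *; nra.
Qed.

Definition heat_weight (mu lam tau s : R) : R := exp (mu * (s * s) / tau - lam * ln tau).

Lemma heat_weight_pos (mu lam tau s : R) : 0 < heat_weight mu lam tau s.
Proof. apply exp_pos. Qed.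

Lemma heat_weight_abs (mu lam tau s : R) : heat_weight mu lam tau (Rabs s) = heat_weight mu lam tau s.
Proof. unfold heat_weight; rewrite <- Rabs_mult, Rabs_pos_eq by nra; reflexivity. Qed.

Lemma ln_succ_lower (tau : R) : 1 <= tau -> ln tau + / (tau + 1) <= ln (tau + 1).
Proof.
  intros Ht.
  assert (Hsplit : ln tau = ln (tau + 1) + ln (tau / (tau + 1))).
  { rewrite <- ln_mult by (try apply Rdiv_lt_0_compat; lra). f_equal; field; lra. }
  pose proof (ln_le_pred (tau / (tau + 1)) ltac:(apply Rdiv_lt_0_compat; lra)) as Hl.
  replace (tau / (tau + 1) - 1) with (- / (tau + 1)) in Hl by (field; lra).
  lra.
Qed.

(* The exponent inequality behind [heat_weight_supermean]: the increase of the exponent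
   caused by a perturbation [d] of the slope is compensated by one step of time. *)
Lemma heat_exponent_step (mu lam M tau s d : R) :
  0 <= mu -> 8 * mu * (M * M) <= 1 -> mu * (M * M) <= lam -> 1 <= tau -> Rabs d <= M ->
  mu * (s * s + d * d) / (tau + 1) - lam * ln (tau + 1)
    + 2 * ((2 * mu * s * d / (tau + 1)) * (2 * mu * s * d / (tau + 1)))
  <= mu * (s * s) / tau - lam * ln tau.
Proof.
  intros Hmu HM Hlam Ht Hd.
  pose proof (ln_succ_lower tau Ht) as Hln.
  assert (Hdd : d * d <= M * M).
  { rewrite <- (Rabs_pos_eq (d * d)) by nra; rewrite Rabs_mult.
    pose proof (Rabs_pos d); nra. }
  set (r := / tau) in *; set (r' := / (tau + 1)) in *.
  assert (Hr' : 0 < r') by (apply Rinv_0_lt_compat; lra).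
  assert (Hrr : r - r' = r * r') by (unfold r, r'; field; lra).
  assert (Hr : 0 < r) by (apply Rinv_0_lt_compat; lra).
  assert (Hr'r : r' <= r) by nra.
  assert (Hlam0 : 0 <= lam) by nra.
  replace (mu * (s * s + d * d) / (tau + 1)) with (mu * (s * s) * r' + mu * (d * d) * r') by (unfold r'; field; lra).
  replace (2 * mu * s * d / (tau + 1)) with (2 * mu * s * d * r') by (unfold r'; field; lra).
  replace (mu * (s * s) / tau) with (mu * (s * s) * r) by (unfold r; field; lra).
  (* The [d^2] term is paid for by the growth of [lam * ln tau] ... *)
  assert (Hd2 : mu * (d * d) * r' <= lam * r') by (apply Rmult_le_compat_r; nra).
  assert (Hln' : lam * r' <= lam * ln (tau + 1) - lam * ln tau) by nra.
  (* ... and the cross term by the decrease of [mu * s^2 / tau]. *)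
  assert (Hss : 0 <= mu * (s * s) * r') by (apply Rmult_le_pos; [apply Rmult_le_pos; nra | lra]).
  assert (Hcross : 2 * (2 * mu * s * d * r' * (2 * mu * s * d * r'))
                   <= mu * (s * s) * r - mu * (s * s) * r').
  { replace (2 * (2 * mu * s * d * r' * (2 * mu * s * d * r')))
      with ((mu * (s * s) * r') * ((8 * mu * (d * d)) * r')) by ring.
    replace (mu * (s * s) * r - mu * (s * s) * r') with ((mu * (s * s) * r') * r)
      by (rewrite <- Rmult_minus_distr_l, Hrr; ring).
    assert (8 * mu * (d * d) <= 1) by nra.
    apply Rmult_le_compat_l; [lra|]; nra. }
  lra.
Qed.

Lemma heat_weight_supermean (mu lam M tau s d : R) :
  0 <= mu -> 8 * mu * (M * M) <= 1 -> mu * (M * M) <= lam -> 1 <= tau -> Rabs d <= M ->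
  heat_weight mu lam (tau + 1) (s + d) + heat_weight mu lam (tau + 1) (s - d)
  <= 2 * heat_weight mu lam tau s.
Proof.
  intros Hmu HM Hlam Ht Hd; unfold heat_weight.
  set (A := mu * (s * s + d * d) / (tau + 1) - lam * ln (tau + 1)).
  set (z := 2 * mu * s * d / (tau + 1)).
  replace (mu * ((s + d) * (s + d)) / (tau + 1) - lam * ln (tau + 1)) with (A + z) by (unfold A, z; field; lra).
  replace (mu * ((s - d) * (s - d)) / (tau + 1) - lam * ln (tau + 1)) with (A + - z) by (unfold A, z; field; lra).
  rewrite !exp_plus.
  pose proof (cosh_le_exp_sq z); pose proof (exp_pos A).
  pose proof (exp_le_mono _ _ (heat_exponent_step mu lam M tau s d Hmu HM Hlam Ht Hd)) as Hexp.
  fold A z in Hexp; rewrite exp_plus in Hexp.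
  nra.
Qed.

Definition grid (f : R -> R) (a u : R) (i : nat) : R := f (a + INR i * u).

Definition dyadic_slope (f : R -> R) (a u : R) (e c : nat) : R :=
  (grid f a u ((c + 1) * 2 ^ e) - grid f a u (c * 2 ^ e)) / (2 ^ e * u).

Definition grid_zygmund (f : R -> R) (a u M : R) : Prop :=
  forall i k : nat,
    Rabs (grid f a u (i + 2 * k) - 2 * grid f a u (i + k) + grid f a u i) <= 2 * M * INR k * u.

Lemma pow2_pos (e : nat) : 0 < 2 ^ e.
Proof. apply pow_lt; lra. Qed.

Lemma pow2_pos_nat (e : nat) : (0 < 2 ^ e)%nat.
Proof. apply Nat.neq_0_lt_0, Nat.pow_nonzero; lia. Qed.

Lemma INR_pow2 (e : nat) : INR (2 ^ e) = 2 ^ e.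
Proof. rewrite pow_INR; reflexivity. Qed.

(* The dyadic node of the grid increment [al < be]: a cell of comparable length inside
   [[al, be]], namely the cell of level [log2 ((be - al) / 2)] following the one that
   contains [al] (or the unit cell [[al, al + 1]] itself when [be = al + 1]). *)
Definition dyadic_node (al be : nat) : nat * nat :=
  if (be =? S al)%nat then (0%nat, al)
  else let e := Nat.log2 ((be - al) / 2) in (e, S (al / 2 ^ e)).

Lemma dyadic_window (al be : nat) : (S al < be)%nat ->
  let e := Nat.log2 ((be - al) / 2) in let c := (al / 2 ^ e)%nat in
  (c * 2 ^ e <= al < (c + 1) * 2 ^ e)%nat /\ ((c + 2) * 2 ^ e <= be <= (c + 5) * 2 ^ e)%nat.
Proof.
  intros Hab e c.
  set (n := ((be - al) / 2)%nat) in *.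
  assert (Hn : (0 < n)%nat) by (apply Nat.div_str_pos; lia).
  destruct (Nat.log2_spec n Hn) as [Hlo Hhi]; fold e in Hlo, Hhi.
  rewrite Nat.pow_succ_r' in Hhi.
  assert (Hhalf : (2 * n <= be - al <= 2 * n + 1)%nat).
  { pose proof (Nat.div_mod (be - al) 2 ltac:(lia)).
    pose proof (Nat.mod_upper_bound (be - al) 2 ltac:(lia)); unfold n; lia. }
  set (m := (2 ^ e)%nat) in *.
  assert (Hm : (0 < m)%nat) by apply pow2_pos_nat.
  pose proof (Nat.div_mod al m ltac:(lia)) as Hdiv; pose proof (Nat.mod_upper_bound al m ltac:(lia)).
  fold c in Hdiv; set (P := (m * c)%nat) in *.
  replace (c * m)%nat with P by (unfold P; lia).
  replace ((c + 1) * m)%nat with (P + m)%nat by (unfold P; lia).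
  replace ((c + 2) * m)%nat with (P + 2 * m)%nat by (unfold P; lia).
  replace ((c + 5) * m)%nat with (P + 5 * m)%nat by (unfold P; lia).
  lia.
Qed.

Lemma dyadic_node_inside (al be : nat) : (al < be)%nat ->
  let (e, c) := dyadic_node al be in (al <= c * 2 ^ e)%nat /\ ((c + 1) * 2 ^ e <= be)%nat.
Proof.
  intros Hab; unfold dyadic_node.
  destruct (Nat.eqb_spec be (S al)) as [-> | Hne]; [simpl; lia|].
  destruct (dyadic_window al be ltac:(lia)) as [Hal Hbe]; cbv zeta in *.
  split; lia.
Qed.

Section DyadicSlopes.

Variables (f : R -> R) (a u M : R).
Hypothesis Hu : 0 < u.
Hypothesis HZ : grid_zygmund f a u M.

Let slope := dyadic_slope f a u.
Let G := grid f a u.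

Lemma grid_increment_slope (e c : nat) :
  G ((c + 1) * 2 ^ e)%nat - G (c * 2 ^ e)%nat = 2 ^ e * u * slope e c.
Proof.
  unfold slope, dyadic_slope, G; pose proof (pow2_pos e); field; nra.
Qed.

Lemma slope_adjacent (e c : nat) : Rabs (slope e (S c) - slope e c) <= 2 * M.
Proof.
  unfold slope, dyadic_slope.
  pose proof (HZ (c * 2 ^ e)%nat (2 ^ e)%nat) as H; rewrite INR_pow2 in H.
  replace (c * 2 ^ e + 2 * 2 ^ e)%nat with ((S c + 1) * 2 ^ e)%nat in H by lia.
  replace (c * 2 ^ e + 2 ^ e)%nat with ((c + 1) * 2 ^ e)%nat in H by lia.
  replace (S c * 2 ^ e)%nat with ((c + 1) * 2 ^ e)%nat by lia.
  pose proof (pow2_pos e) as He.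
  set (A := grid f a u ((S c + 1) * 2 ^ e)) in *.
  set (B := grid f a u ((c + 1) * 2 ^ e)) in *.
  set (C := grid f a u (c * 2 ^ e)) in *.
  replace ((A - B) / (2 ^ e * u) - (B - C) / (2 ^ e * u)) with ((A - 2 * B + C) / (2 ^ e * u))
    by (field; lra).
  unfold Rdiv; rewrite Rabs_mult, Rabs_inv, (Rabs_pos_eq (2 ^ e * u)) by nra.
  apply (Rmult_le_reg_r (2 ^ e * u)); [nra|].
  rewrite Rmult_assoc, Rinv_l by nra; nra.
Qed.

Lemma slope_split (e c : nat) : slope (S e) c = (slope e (2 * c) + slope e (2 * c + 1)) / 2.
Proof.
  unfold slope, dyadic_slope.
  replace ((c + 1) * 2 ^ S e)%nat with ((2 * c + 1 + 1) * 2 ^ e)%nat by (simpl; lia).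
  replace (c * 2 ^ S e)%nat with (2 * c * 2 ^ e)%nat by (simpl; lia).
  pose proof (pow2_pos e); simpl pow; field; lra.
Qed.

Lemma slope_children (e c : nat) :
  Rabs (slope e (2 * c)) <= Rabs (slope (S e) c) + M /\
  Rabs (slope e (2 * c + 1)) <= Rabs (slope (S e) c) + M.
Proof.
  rewrite slope_split.
  pose proof (slope_adjacent e (2 * c)) as H; replace (S (2 * c)) with (2 * c + 1)%nat in H by lia.
  revert H; unfold Rabs; repeat destruct Rcase_abs; intros; split; lra.
Qed.

Lemma cell_oscillation (e : nat) : 0 <= M -> forall c i : nat,
  (c * 2 ^ e <= i <= (c + 1) * 2 ^ e)%nat ->
  Rabs (G i - G (c * 2 ^ e)%nat) <= 2 ^ e * u * (Rabs (slope e c) + 2 * M).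
Proof.
  intros HM; induction e as [|e IH]; intros c i Hi.
  - change (2 ^ 0)%nat with 1%nat in *; simpl pow.
    pose proof (Rabs_pos (slope 0 c)).
    assert (i = c * 1 \/ i = (c + 1) * 1)%nat as [-> | ->] by lia.
    + unfold Rminus; rewrite Rplus_opp_r, Rabs_R0; nra.
    + pose proof (grid_increment_slope 0 c) as E; simpl in E; rewrite E.
      rewrite Rabs_mult, (Rabs_pos_eq (1 * u)) by lra; nra.
  - destruct (slope_children e c) as [Hl Hr].
    pose proof (pow2_pos e) as He.
    replace (c * 2 ^ S e)%nat with (2 * c * 2 ^ e)%nat in * by (simpl; lia).
    replace (2 ^ S e) with (2 * 2 ^ e) by reflexivity.
    pose proof (Rabs_pos (slope (S e) c)).
    assert (Hw : 0 <= 2 ^ e * u) by nra.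
    destruct (Nat.le_gt_cases i ((2 * c + 1) * 2 ^ e)) as [Hle | Hgt].
    + eapply Rle_trans; [apply (IH (2 * c)%nat i); simpl in Hi; lia|].
      rewrite (Rmult_assoc 2), (Rmult_assoc 2).
      apply Rle_trans with (2 ^ e * u * (2 * (Rabs (slope (S e) c) + 2 * M))); [|right; ring].
      apply Rmult_le_compat_l; lra.
    + pose proof (IH (2 * c + 1)%nat i ltac:(simpl in Hi; lia)) as Hright.
      pose proof (grid_increment_slope e (2 * c)) as E.
      replace (G i - G (2 * c * 2 ^ e)%nat) with
        ((G i - G ((2 * c + 1) * 2 ^ e)%nat) + (G ((2 * c + 1) * 2 ^ e)%nat - G (2 * c * 2 ^ e)%nat))
        by ring.
      eapply Rle_trans; [apply Rabs_triang|].
      rewrite E, Rabs_mult, (Rabs_pos_eq (2 ^ e * u)) by nra.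
      apply Rle_trans with (2 ^ e * u * (2 * (Rabs (slope (S e) c) + 2 * M))); [|right; ring].
      assert (2 ^ e * u * Rabs (slope e (2 * c)) <= 2 ^ e * u * (Rabs (slope (S e) c) + M))
        by (apply Rmult_le_compat_l; lra).
      assert (2 ^ e * u * (Rabs (slope e (2 * c + 1)) + 2 * M) <= 2 ^ e * u * (Rabs (slope (S e) c) + 3 * M))
        by (apply Rmult_le_compat_l; lra).
      nra.
Qed.

Lemma slope_drift (e c r : nat) : Rabs (slope e (c + r)) <= Rabs (slope e c) + 2 * M * INR r.
Proof.
  induction r as [|r IH].
  - rewrite Nat.add_0_r; simpl; lra.
  - pose proof (slope_adjacent e (c + r)) as H.
    replace (c + S r)%nat with (S (c + r)) by lia; rewrite S_INR.
    pose proof (Rabs_triang_inv (slope e (S (c + r))) (slope e (c + r))); lra.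
Qed.

Lemma cells_oscillation (e c : nat) : 0 <= M -> forall r i : nat,
  (c * 2 ^ e <= i <= (c + S r) * 2 ^ e)%nat ->
  Rabs (G i - G (c * 2 ^ e)%nat)
    <= INR (S r) * (2 ^ e * u) * (Rabs (slope e c) + 2 * M * INR (S r) + 2 * M).
Proof.
  intros HM; pose proof (pow2_pos e) as He.
  assert (Hw : 0 <= 2 ^ e * u) by nra.
  set (w := 2 ^ e * u) in *; set (s := Rabs (slope e c)).
  assert (Hs : 0 <= s) by apply Rabs_pos.
  induction r as [|r IH]; intros i Hi.
  - pose proof (cell_oscillation e HM c i ltac:(lia)) as H; simpl INR; fold w s in H; nra.
  - set (n := INR (S r)) in *.
    assert (Hn : INR (S (S r)) = n + 1) by (unfold n; rewrite (S_INR (S r)); ring).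
    rewrite Hn.
    assert (Hmono : n * w * (s + 2 * M * n + 2 * M) <= (n + 1) * w * (s + 2 * M * (n + 1) + 2 * M)).
    { assert (0 <= n) by apply pos_INR; apply Rmult_le_compat; nra. }
    destruct (Nat.le_gt_cases i ((c + S r) * 2 ^ e)) as [Hle | Hgt].
    + pose proof (IH i ltac:(lia)); lra.
    + pose proof (cell_oscillation e HM (c + S r) i ltac:(lia)) as Hlast.
      pose proof (slope_drift e c (S r)) as Hdrift; fold n in Hdrift.
      pose proof (IH ((c + S r) * 2 ^ e)%nat ltac:(split; [apply Nat.mul_le_mono_r | ]; lia)) as Hprev.
      replace (G i - G (c * 2 ^ e)%nat) with
        ((G i - G ((c + S r) * 2 ^ e)%nat) + (G ((c + S r) * 2 ^ e)%nat - G (c * 2 ^ e)%nat)) by ring.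
      eapply Rle_trans; [apply Rabs_triang|]; fold w s in Hlast, Hdrift.
      assert (w * (Rabs (slope e (c + S r)) + 2 * M) <= w * (s + 2 * M * n + 2 * M))
        by (apply Rmult_le_compat_l; lra).
      assert (n * w * (s + 2 * M * n + 2 * M) <= n * w * (s + 2 * M * (n + 1) + 2 * M))
        by (assert (0 <= n) by apply pos_INR; apply Rmult_le_compat_l; nra).
      nra.
Qed.

Lemma increment_in_window (e c al be : nat) : 0 <= M ->
  (c * 2 ^ e <= al <= (c + 5) * 2 ^ e)%nat -> (c * 2 ^ e <= be <= (c + 5) * 2 ^ e)%nat ->
  Rabs (G be - G al) <= 10 * (2 ^ e * u) * (Rabs (slope e (S c)) + 14 * M).
Proof.
  intros HM Hal Hbe.
  pose proof (cells_oscillation e c HM 4 al ltac:(lia)) as Ha.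
  pose proof (cells_oscillation e c HM 4 be ltac:(lia)) as Hb.
  replace (INR (S 4)) with 5 in Ha, Hb by (simpl; lra).
  pose proof (slope_adjacent e c) as Hadj.
  pose proof (Rabs_triang_inv (slope e c) (slope e (S c))) as Htri; rewrite Rabs_minus_sym in Htri.
  replace (G be - G al) with ((G be - G (c * 2 ^ e)%nat) - (G al - G (c * 2 ^ e)%nat)) by ring.
  eapply Rle_trans; [apply Rabs_triang|]; rewrite Rabs_Ropp.
  pose proof (pow2_pos e); assert (0 <= 2 ^ e * u) by nra.
  assert (2 ^ e * u * Rabs (slope e c) <= 2 ^ e * u * (Rabs (slope e (S c)) + 2 * M))
    by (apply Rmult_le_compat_l; lra).
  nra.
Qed.

Lemma slope_root_bound (d e c : nat) : (c + 1 <= 2 ^ d)%nat ->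
  Rabs (slope e c) <= Rabs (slope (e + d) 0) + M * INR d.
Proof.
  revert e c; induction d as [|d IH]; intros e c Hc.
  - simpl in Hc; replace c with 0%nat by lia; rewrite Nat.add_0_r; simpl; lra.
  - rewrite Nat.pow_succ_r' in Hc; rewrite S_INR.
    replace (e + S d)%nat with (S e + d)%nat by lia.
    destruct (Nat.Even_or_Odd c) as [[c' ->] | [c' ->]];
      destruct (slope_children e c') as [Hl Hr]; pose proof (IH (S e) c' ltac:(lia)); lra.
Qed.

Lemma increment_le_node (al be : nat) : 0 <= M -> (al < be)%nat ->
  let (e, c) := dyadic_node al be in
  Rabs (G be - G al) <= 10 * (2 ^ e * u) * (Rabs (slope e c) + 14 * M).
Proof.
  intros HM Hab; unfold dyadic_node.
  destruct (Nat.eqb_spec be (S al)) as [-> | Hne].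
  - pose proof (grid_increment_slope 0 al) as E; simpl in E.
    replace ((al + 1) * 1)%nat with (S al) in E by lia; replace (al * 1)%nat with al in E by lia.
    rewrite E, Rabs_mult, (Rabs_pos_eq (1 * u)) by lra; simpl.
    pose proof (Rabs_pos (slope 0 al)); nra.
  - destruct (dyadic_window al be ltac:(lia)) as [Hal Hbe]; cbv zeta in *.
    apply increment_in_window; [exact HM | lia | lia].
Qed.

End DyadicSlopes.

Fixpoint dyadic_chain (lo hi : nat) (l : list (nat * nat)) : Prop :=
  match l with
  | nil => True
  | (e, c) :: t =>
      (lo <= c * 2 ^ e)%nat /\ ((c + 1) * 2 ^ e <= hi)%nat /\ dyadic_chain ((c + 1) * 2 ^ e) hi t
  end.

Fixpoint chain_weight (W : nat -> nat -> R) (l : list (nat * nat)) : R :=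
  match l with nil => 0 | (e, c) :: t => W e c + chain_weight W t end.

Lemma chain_weight_app (W : nat -> nat -> R) (l1 l2 : list (nat * nat)) :
  chain_weight W (l1 ++ l2) = chain_weight W l1 + chain_weight W l2.
Proof. induction l1 as [|[e c] t IH]; simpl; [lra | rewrite IH; lra]. Qed.

Lemma cell_inside_length (lo hi e c : nat) :
  (lo <= c * 2 ^ e)%nat -> ((c + 1) * 2 ^ e <= hi)%nat -> (lo + 2 ^ e <= hi)%nat.
Proof. intros H1 H2; rewrite Nat.mul_add_distr_r, Nat.mul_1_l in H2; lia. Qed.

Lemma chain_cells_inside (lo hi : nat) (l : list (nat * nat)) : dyadic_chain lo hi l ->
  Forall (fun p => (lo + 2 ^ fst p <= hi)%nat) l.
Proof.
  revert lo; induction l as [|[e c] t IH]; intros lo H; simpl in *; constructor.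
  - simpl; destruct H as [H1 [H2 _]]; exact (cell_inside_length lo hi e c H1 H2).
  - destruct H as [H1 [_ H3]]; eapply Forall_impl; [|exact (IH _ H3)].
    intros p Hp; simpl in *; lia.
Qed.

Lemma chain_levels_bound (lo hi E : nat) (l : list (nat * nat)) :
  dyadic_chain lo hi l -> (hi < lo + 2 ^ S E)%nat -> Forall (fun p => (fst p <= E)%nat) l.
Proof.
  intros Hc Hlen; eapply Forall_impl; [|exact (chain_cells_inside _ _ _ Hc)].
  intros [e c] Hp; cbn [fst] in *.
  destruct (Nat.le_gt_cases e E) as [|Hgt]; [assumption|].
  pose proof (Nat.pow_le_mono_r 2 (S E) e ltac:(lia) ltac:(lia)); lia.
Qed.

Lemma chain_empty (hi : nat) (t : list (nat * nat)) : dyadic_chain hi hi t -> t = nil.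
Proof.
  destruct t as [|[e c] t]; simpl; [auto|]; intros [H1 [H2 _]].
  pose proof (pow2_pos_nat e); nia.
Qed.

Lemma dyadic_align (e E c k : nat) :
  (e <= E)%nat -> (c * 2 ^ e < k * 2 ^ E)%nat -> ((c + 1) * 2 ^ e <= k * 2 ^ E)%nat.
Proof.
  intros He Hlt; replace E with (e + (E - e))%nat in * by lia.
  rewrite Nat.pow_add_r in *; pose proof (pow2_pos_nat e); pose proof (pow2_pos_nat (E - e)).
  set (p := (2 ^ e)%nat) in *; set (q := (2 ^ (E - e))%nat) in *.
  assert (c < k * q)%nat by nia; nia.
Qed.

Lemma chain_split (E k : nat) (l : list (nat * nat)) (lo hi : nat) :
  Forall (fun p => (fst p <= E)%nat) l -> dyadic_chain lo hi l -> (lo <= k * 2 ^ E)%nat ->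
  exists l1 l2, l = l1 ++ l2 /\ dyadic_chain lo (k * 2 ^ E) l1 /\ dyadic_chain (k * 2 ^ E) hi l2.
Proof.
  revert lo; induction l as [|[e c] t IH]; intros lo HF Hc Hlo.
  - exists nil, nil; simpl; auto.
  - inversion HF as [|x y He HF']; subst; simpl in He, Hc; destruct Hc as [H1 [H2 H3]].
    destruct (Nat.lt_ge_cases (c * 2 ^ e) (k * 2 ^ E)) as [Hlt | Hge].
    + pose proof (dyadic_align e E c k He Hlt) as Hfit.
      destruct (IH _ HF' H3 Hfit) as [l1 [l2 [-> [C1 C2]]]].
      exists ((e, c) :: l1), l2; simpl; auto.
    + exists nil, ((e, c) :: t); simpl; repeat split; auto; lia.
Qed.

Lemma chain_proper_levels (E c0 e c : nat) (t : list (nat * nat)) : e <> S E ->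
  dyadic_chain (c0 * 2 ^ S E) ((c0 + 1) * 2 ^ S E) ((e, c) :: t) ->
  Forall (fun p => (fst p <= E)%nat) ((e, c) :: t).
Proof.
  intros Hne Hc; pose proof Hc as Hc'; cbn [dyadic_chain] in Hc'; destruct Hc' as [H1 [H2 H3]].
  pose proof (pow2_pos_nat e); pose proof (pow2_pos_nat E).
  constructor.
  - apply chain_levels_bound with (E := S E) in Hc; [|rewrite !Nat.pow_succ_r'; nia].
    inversion Hc; simpl in *; lia.
  - apply (chain_levels_bound _ _ _ _ H3); rewrite !Nat.pow_succ_r' in *; nia.
Qed.

Lemma chain_weight_le_cell (W : nat -> nat -> R) (K : nat) :
  (forall e c, 0 <= W e c) ->
  (forall e c, (S e <= K)%nat -> W e (2 * c)%nat + W e (2 * c + 1)%nat <= W (S e) c) ->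
  forall e0 c0 l, (e0 <= K)%nat -> dyadic_chain (c0 * 2 ^ e0) ((c0 + 1) * 2 ^ e0) l ->
  chain_weight W l <= W e0 c0.
Proof.
  intros HW Hsup; induction e0 as [|e1 IH]; intros c0 l HK Hc.
  - destruct l as [|[e c] t]; simpl in *; [apply HW|].
    destruct Hc as [H1 [H2 H3]]; pose proof (pow2_pos_nat e).
    assert (e = 0%nat) as -> by (destruct e; [reflexivity | rewrite Nat.pow_succ_r' in *; nia]).
    simpl in *; assert (c = c0) as -> by lia.
    rewrite (chain_empty _ t H3); simpl; lra.
  - destruct l as [|[e c] t]; [simpl; apply HW|].
    destruct (Nat.eq_dec e (S e1)) as [-> | Hne].
    + cbn [dyadic_chain] in Hc; destruct Hc as [H1 [H2 H3]]; pose proof (pow2_pos_nat (S e1)).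
      set (p := (2 ^ S e1)%nat) in *.
      assert (c = c0) as -> by (apply Nat.le_antisymm; [apply Nat.lt_succ_r | ];
        apply (Nat.mul_le_mono_pos_r _ _ p); nia).
      rewrite (chain_empty _ t H3); simpl; lra.
    + pose proof (chain_proper_levels e1 c0 e c t Hne Hc) as HF.
      replace (c0 * 2 ^ S e1)%nat with (2 * c0 * 2 ^ e1)%nat in Hc by (rewrite Nat.pow_succ_r'; lia).
      replace ((c0 + 1) * 2 ^ S e1)%nat with ((2 * c0 + 1 + 1) * 2 ^ e1)%nat in Hc
        by (rewrite Nat.pow_succ_r'; lia).
      destruct (chain_split e1 (2 * c0 + 1) _ _ _ HF Hc ltac:(nia)) as [l1 [l2 [-> [C1 C2]]]].
      rewrite chain_weight_app.
      pose proof (IH (2 * c0)%nat l1 ltac:(lia) C1); pose proof (IH (2 * c0 + 1)%nat l2 ltac:(lia) C2).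
      pose proof (Hsup e1 c0 HK); lra.
Qed.

Lemma heat_weight_dominates (mu lam q tau s : R) :
  0 <= mu -> 0 <= lam <= 2 * q - 1 -> 1 <= tau -> Rpower tau q < s ->
  mu * s / Rpower tau q <= heat_weight mu lam tau s.
Proof.
  intros Hmu Hlam Htau Hs; unfold heat_weight, Rpower in *.
  set (l := ln tau) in *.
  assert (Hl : 0 <= l) by (unfold l; rewrite <- ln_1; apply ln_le_mono; lra).
  assert (Etau : tau = exp l) by (unfold l; rewrite exp_ln; lra).
  pose proof (exp_pos (q * l)) as Hq; pose proof (exp_pos (lam * l)) as Hlm.
  pose proof (exp_pos l) as Hel.
  assert (Hgrow : exp l * exp (lam * l) <= s * exp (q * l)).
  { pose proof (exp_le_mono (l + lam * l) (q * l + q * l) ltac:(nra)) as H; rewrite !exp_plus in H.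
    pose proof (Rmult_le_compat_r (exp (q * l)) _ _ (Rlt_le _ _ Hq) (Rlt_le _ _ Hs)); lra. }
  rewrite Rminus_def, exp_plus, exp_Ropp.
  pose proof (exp_ineq1_le (mu * (s * s) / tau)) as Hexp.
  apply Rle_trans with (mu * (s * s) / tau * / exp (lam * l)).
  - rewrite Etau; unfold Rdiv.
    apply (Rmult_le_reg_r (exp (q * l) * exp l * exp (lam * l))); [repeat apply Rmult_lt_0_compat; lra|].
    replace (mu * s * / exp (q * l) * (exp (q * l) * exp l * exp (lam * l)))
      with (mu * s * (exp l * exp (lam * l))) by (field; lra).
    replace (mu * (s * s) * / exp l * / exp (lam * l) * (exp (q * l) * exp l * exp (lam * l)))
      with (mu * s * (s * exp (q * l))) by (field; lra).
    apply Rmult_le_compat_l; nra.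
  - apply Rmult_le_compat_r; [left; apply Rinv_0_lt_compat; lra|].
    assert (0 <= mu * (s * s) / tau) by (apply Rdiv_nonneg; nra); lra.
Qed.

Lemma profile_le_heat_weight (K M mu lam q tau s : R) :
  0 < K -> 0 < M -> 0 < mu -> 0 <= lam <= 2 * q - 1 -> 1 <= tau -> 0 <= s ->
  K * (s + 14 * M) / Rpower tau q
    <= K * (1 + 14 * M) + K * (1 + 14 * M) / mu * heat_weight mu lam tau s.
Proof.
  intros HK HM Hmu Hlam Htau Hs.
  assert (HT : 1 <= Rpower tau q) by (apply Rpower_ge1; lra).
  pose proof (heat_weight_pos mu lam tau s) as HE.
  assert (HKM : 0 < K * (1 + 14 * M) / mu) by (apply Rdiv_lt_0_compat; nra).
  destruct (Rle_or_lt s (Rpower tau q)) as [Hsmall | Hlarge].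
  - assert (K * (s + 14 * M) / Rpower tau q <= K * (1 + 14 * M)).
    { apply (Rmult_le_reg_r (Rpower tau q)); [lra|].
      unfold Rdiv; rewrite Rmult_assoc, Rinv_l, Rmult_1_r by lra.
      rewrite Rmult_assoc; apply Rmult_le_compat_l; nra. }
    nra.
  - pose proof (heat_weight_dominates mu lam q tau s ltac:(lra) Hlam Htau Hlarge) as Hdom.
    assert (K * (s + 14 * M) / Rpower tau q <= K * (1 + 14 * M) / mu * (mu * s / Rpower tau q)).
    { unfold Rdiv; replace (K * (1 + 14 * M) * / mu * (mu * s * / Rpower tau q))
        with (K * ((1 + 14 * M) * s) * / Rpower tau q) by (field; lra).
      apply Rmult_le_compat_r; [left; apply Rinv_0_lt_compat; lra|].
      apply Rmult_le_compat_l; nra. }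
    assert (K * (1 + 14 * M) / mu * (mu * s / Rpower tau q) <= K * (1 + 14 * M) / mu * heat_weight mu lam tau s)
      by (apply Rmult_le_compat_l; lra).
    nra.
Qed.

Lemma dyadic_decay (P Q : R) (n : nat) :
  0 < P -> 0 < Q -> 1 <= INR n -> 4 * (P + Q) / ((ln 2 / 2) * (ln 2 / 2)) <= INR n ->
  (P + Q * INR n) / 2 ^ n <= exp (- (ln 2 / 2 * INR n)).
Proof.
  intros HP HQ Hn1 Hn; set (rho := ln 2 / 2) in *; set (x := INR n) in *.
  assert (Hrho : 0 < rho) by (unfold rho; pose proof ln_lt_2; lra).
  assert (Hbig : 4 * (P + Q) <= rho * rho * x).
  { apply (Rmult_le_compat_l (rho * rho)) in Hn; [|nra].
    replace (rho * rho * (4 * (P + Q) / (rho * rho))) with (4 * (P + Q)) in Hn by (field; lra); lra. }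
  assert (Hpoly : P + Q * x <= exp (rho * x)).
  { pose proof (sq_half_le_exp (rho * x) ltac:(nra)); nra. }
  rewrite pow2_exp_ln; fold x.
  replace (x * ln 2) with (rho * x + rho * x) by (unfold rho; field).
  rewrite exp_plus, exp_Ropp; pose proof (exp_pos (rho * x)).
  apply (Rmult_le_reg_r (exp (rho * x) * exp (rho * x))); [nra|].
  unfold Rdiv; rewrite Rmult_assoc, Rinv_l by nra.
  replace (/ exp (rho * x) * (exp (rho * x) * exp (rho * x))) with (exp (rho * x)) by (field; lra).
  lra.
Qed.

Lemma Phi_log_regime (q delta : R) (Phi : R -> R) (n : nat) (x : R) :
  0 <= q -> (forall t, 0 < t < delta -> Phi t = t / Rpower (ln (1 / t)) q) ->
  0 < x < delta -> 1 <= INR n -> x <= exp (- (ln 2 / 2 * INR n)) ->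
  Phi x <= x / (Rpower (ln 2 / 4) q * Rpower (INR n + 1) q).
Proof.
  intros Hq Hform Hx Hn Hxe; rewrite Hform by lra.
  assert (Hrho : 0 < ln 2 / 2) by (pose proof ln_lt_2; lra).
  assert (Hlog : ln 2 / 2 * INR n <= ln (1 / x)).
  { rewrite <- (ln_exp (ln 2 / 2 * INR n)); apply ln_le_mono; [apply exp_pos|].
    rewrite exp_Ropp in Hxe; pose proof (exp_pos (ln 2 / 2 * INR n)).
    replace (1 / x) with (/ x) by (field; lra).
    rewrite <- (Rinv_inv (exp _)); apply Rinv_le_contravar; [lra | exact Hxe]. }
  assert (Hden : Rpower (ln 2 / 4) q * Rpower (INR n + 1) q <= Rpower (ln (1 / x)) q).
  { rewrite Rpower_mult_distr by lra; apply Rle_Rpower_l; [lra|]; split; nra. }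
  assert (0 < Rpower (ln 2 / 4) q * Rpower (INR n + 1) q)
    by (unfold Rpower; apply Rmult_lt_0_compat; apply exp_pos).
  unfold Rdiv; apply Rmult_le_compat_l; [lra|]; apply Rinv_le_contravar; lra.
Qed.

Lemma Phi_le_id_near0 (q : R) (Phi : R -> R) : is_Phi_q q Phi -> 0 <= q ->
  exists d, 0 < d /\ forall t, 0 < t < d -> Phi t <= t.
Proof.
  intros [_ [_ [_ [delta [Hd Hform]]]]] Hq.
  exists (Rmin delta (1 / 3)); split; [apply Rmin_glb_lt; lra|].
  intros t Ht; pose proof (Rmin_l delta (1 / 3)); pose proof (Rmin_r delta (1 / 3)).
  rewrite Hform by lra.
  assert (Hlog : 1 <= ln (1 / t)).
  { rewrite <- (ln_exp 1) at 1; apply ln_le_mono; [apply exp_pos|].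
    pose proof exp_le_3; apply (Rmult_le_reg_r t); [lra|].
    replace (1 / t * t) with 1 by (field; lra); nra. }
  pose proof (Rpower_ge1 _ q Hlog Hq).
  assert (Hinv : / Rpower (ln (1 / t)) q <= 1)
    by (apply Rle_trans with (/ 1); [apply Rinv_le_contravar | rewrite Rinv_1]; lra).
  unfold Rdiv; pose proof (Rmult_le_compat_l t _ _ ltac:(lra) Hinv); lra.
Qed.

Lemma Phi_zero (q : R) (Phi : R -> R) : is_Phi_q q Phi -> 0 <= q -> Phi 0 = 0.
Proof.
  intros HP Hq; destruct (Phi_le_id_near0 q Phi HP Hq) as [d [Hd Hsmall]].
  destruct HP as [H0 [Hmono _]]; pose proof (H0 0 (Rle_refl 0)).
  destruct (Rle_or_lt (Phi 0) 0) as [|Hpos]; [lra|].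
  set (t := Rmin (d / 2) (Phi 0 / 2)).
  assert (0 < t /\ t < d /\ t < Phi 0)
    by (unfold t; pose proof (Rmin_l (d / 2) (Phi 0 / 2)); pose proof (Rmin_r (d / 2) (Phi 0 / 2));
        repeat split; try apply Rmin_glb_lt; lra).
  pose proof (Hsmall t ltac:(lra)); pose proof (Hmono 0 t ltac:(lra) ltac:(lra)); lra.
Qed.

(* Bound on [Phi] at the scale [L / 2^n] of the [n]-th dyadic generation, for [n] large:
   the logarithmic gain turns the slope into the heat weight. *)
Lemma Phi_dyadic_large (q delta L M s0 : R) (Phi : R -> R) (n : nat) (s : R) :
  q > 1 / 2 -> (forall t, 0 < t < delta -> Phi t = t / Rpower (ln (1 / t)) q) ->
  0 < L -> 0 < M -> 1 <= INR n -> Rabs s <= s0 + M * INR n ->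
  (10 * L * (s0 + 14 * M) + 10 * L * M * INR n) / 2 ^ n <= exp (- (ln 2 / 2 * INR n)) ->
  exp (- (ln 2 / 2 * INR n)) < delta ->
  let lam := Rmin (1 / 8) (2 * q - 1) in let K := 10 / Rpower (ln 2 / 4) q in
  Phi (10 * (L / 2 ^ n) * (Rabs s + 14 * M))
    <= L / 2 ^ n * (K * (1 + 14 * M)
                    + K * (1 + 14 * M) / (lam / (M * M)) * heat_weight (lam / (M * M)) lam (INR n + 1) s).
Proof.
  intros Hq Hform HL HM Hn Hs Hdecay Hdelta lam K.
  assert (Hlam : 0 < lam <= 2 * q - 1)
    by (unfold lam; split; [apply Rmin_glb_lt | apply Rmin_r]; lra).
  assert (HK : 0 < K) by (unfold K, Rpower; apply Rdiv_lt_0_compat; [lra | apply exp_pos]).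
  pose proof (pow2_pos n); pose proof (Rabs_pos s).
  assert (Hw : 0 < L / 2 ^ n) by (apply Rdiv_lt_0_compat; lra).
  set (x := 10 * (L / 2 ^ n) * (Rabs s + 14 * M)).
  assert (Hx : 0 < x) by (unfold x; nra).
  assert (Hxle : x <= (10 * L * (s0 + 14 * M) + 10 * L * M * INR n) / 2 ^ n).
  { unfold x, Rdiv; replace (10 * L * (s0 + 14 * M) + 10 * L * M * INR n)
      with (10 * L * (s0 + M * INR n + 14 * M)) by ring.
    assert (0 < / 2 ^ n) by (apply Rinv_0_lt_compat; lra).
    replace (10 * (L * / 2 ^ n) * (Rabs s + 14 * M)) with (10 * L * (Rabs s + 14 * M) * / 2 ^ n) by ring.
    apply Rmult_le_compat_r; nra. }
  eapply Rle_trans; [apply (Phi_log_regime q delta Phi n x); [lra | exact Hform | lra..]|].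
  replace (x / (Rpower (ln 2 / 4) q * Rpower (INR n + 1) q))
    with (L / 2 ^ n * (K * (Rabs s + 14 * M) / Rpower (INR n + 1) q))
    by (unfold x, K, Rpower; field; repeat split; try apply exp_neq_0; lra).
  apply Rmult_le_compat_l; [lra|].
  rewrite <- (heat_weight_abs _ _ _ s).
  apply profile_le_heat_weight; try lra.
  apply Rdiv_lt_0_compat; nra.
Qed.

(* For the finitely many generations [n <= n1], monotonicity of [Phi] suffices. *)
Lemma Phi_dyadic_small (L M s0 : R) (Phi : R -> R) (n n1 : nat) (s : R) :
  (forall t, 0 <= t -> 0 <= Phi t) -> (forall s t, 0 <= s -> s <= t -> Phi s <= Phi t) ->
  0 < L -> 0 <= M -> (n <= n1)%nat -> Rabs s <= s0 + M * INR n ->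
  Phi (10 * (L / 2 ^ n) * (Rabs s + 14 * M))
    <= L / 2 ^ n * (Phi (10 * L * (s0 + M * INR n1 + 14 * M)) * 2 ^ n1 / L).
Proof.
  intros HP0 Hmono HL HM Hn Hs.
  pose proof (pow2_pos n); pose proof (pow2_pos n1); pose proof (Rabs_pos s).
  pose proof (le_INR _ _ Hn).
  assert (Hscale : L / 2 ^ n <= L).
  { apply (Rmult_le_reg_r (2 ^ n)); [lra|]; unfold Rdiv; rewrite Rmult_assoc, Rinv_l by lra.
    pose proof (pow_R1_Rle 2 n ltac:(lra)); nra. }
  assert (Hgen : 2 ^ n <= 2 ^ n1) by (apply Rle_pow; [lra | exact Hn]).
  set (X := 10 * L * (s0 + M * INR n1 + 14 * M)).
  assert (Hle : 10 * (L / 2 ^ n) * (Rabs s + 14 * M) <= X).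
  { unfold X; assert (L / 2 ^ n * (Rabs s + 14 * M) <= L * (s0 + M * INR n1 + 14 * M)); [|lra].
    apply Rmult_le_compat; try nra; apply Rdiv_nonneg; lra. }
  eapply Rle_trans; [apply Hmono; [apply Rmult_le_pos; [apply Rmult_le_pos, Rdiv_nonneg|]; lra | exact Hle]|].
  assert (HX : 0 <= Phi X).
  { apply HP0; unfold X; assert (M * INR n <= M * INR n1) by (apply Rmult_le_compat_l; lra); nra. }
  replace (L / 2 ^ n * (Phi X * 2 ^ n1 / L)) with (Phi X * (2 ^ n1 / 2 ^ n)) by (field; lra).
  rewrite <- (Rmult_1_r (Phi X)) at 1; apply Rmult_le_compat_l; [exact HX|].
  apply (Rmult_le_reg_r (2 ^ n)); [lra|]; unfold Rdiv; rewrite Rmult_assoc, Rinv_l; lra.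
Qed.

Lemma Phi_dyadic_bound (q L M s0 : R) (Phi : R -> R) :
  q > 1 / 2 -> is_Phi_q q Phi -> 0 < L -> 0 < M -> 0 <= s0 ->
  let lam := Rmin (1 / 8) (2 * q - 1) in
  exists C1 C2, 0 <= C1 /\ 0 <= C2 /\
    forall (n : nat) (s : R), Rabs s <= s0 + M * INR n ->
      Phi (10 * (L / 2 ^ n) * (Rabs s + 14 * M))
        <= L / 2 ^ n * (C1 + C2 * heat_weight (lam / (M * M)) lam (INR n + 1) s).
Proof.
  intros Hq [HP0 [Hmono [_ [delta [Hd Hform]]]]] HL HM Hs0 lam.
  assert (Hlam : 0 < lam) by (unfold lam; apply Rmin_glb_lt; lra).
  set (rho := ln 2 / 2); assert (Hrho : 0 < rho) by (unfold rho; pose proof ln_lt_2; lra).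
  set (P := 10 * L * (s0 + 14 * M)); set (Q := 10 * L * M).
  assert (HP : 0 < P) by (unfold P; nra); assert (HQ : 0 < Q) by (unfold Q; nra).
  set (T := Rmax 1 (Rmax (4 * (P + Q) / (rho * rho)) (- ln delta / rho))).
  assert (HT : 1 <= T /\ 4 * (P + Q) / (rho * rho) <= T /\ - ln delta / rho <= T)
    by (unfold T; repeat split; eauto using Rmax_l, Rmax_r, Rle_trans).
  destruct (INR_archimed 1 T ltac:(lra)) as [n1 Hn1]; rewrite Rmult_1_r in Hn1.
  set (K := 10 / Rpower (ln 2 / 4) q).
  assert (HK : 0 < K) by (unfold K, Rpower; apply Rdiv_lt_0_compat; [lra | apply exp_pos]).
  set (X := 10 * L * (s0 + M * INR n1 + 14 * M)).
  assert (HX : 0 <= Phi X * 2 ^ n1 / L).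
  { pose proof (pos_INR n1); pose proof (pow2_pos n1).
    assert (0 <= M * INR n1) by (apply Rmult_le_pos; lra).
    apply Rdiv_nonneg; [apply Rmult_le_pos; [apply HP0; unfold X; nra | lra] | lra]. }
  exists (Rmax (Phi X * 2 ^ n1 / L) (K * (1 + 14 * M))), (K * (1 + 14 * M) / (lam / (M * M))).
  split; [eapply Rle_trans; [exact HX | apply Rmax_l]|].
  split; [apply Rdiv_nonneg; [nra | apply Rdiv_lt_0_compat; nra]|].
  intros n s Hs.
  pose proof (pow2_pos n); pose proof (heat_weight_pos (lam / (M * M)) lam (INR n + 1) s).
  assert (0 < K * (1 + 14 * M) / (lam / (M * M))) by (apply Rdiv_lt_0_compat; [nra | apply Rdiv_lt_0_compat; nra]).
  assert (0 < L / 2 ^ n) by (apply Rdiv_lt_0_compat; lra).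
  destruct (Nat.le_gt_cases n n1) as [Hsmall | Hlarge].
  - eapply Rle_trans; [apply (Phi_dyadic_small L M s0 Phi n n1 s); auto; lra|].
    apply Rmult_le_compat_l; [lra|]; fold X.
    pose proof (Rmax_l (Phi X * 2 ^ n1 / L) (K * (1 + 14 * M))); nra.
  - assert (Hn : T < INR n) by (pose proof (lt_INR _ _ Hlarge); lra).
    eapply Rle_trans; [apply (Phi_dyadic_large q delta L M s0 Phi n s Hq Hform HL HM); try lra|].
    + apply dyadic_decay; fold rho P Q; lra.
    + rewrite <- (exp_ln delta) by lra; apply exp_increasing.
      apply (Rmult_lt_compat_l rho) in Hn; [|lra].
      assert (rho * (- ln delta / rho) = - ln delta) by (field; lra); fold rho; nra.
    + apply Rmult_le_compat_l; [lra|]; pose proof (Rmax_r (Phi X * 2 ^ n1 / L) (K * (1 + 14 * M))); fold K lam; lra.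
Qed.

Fixpoint sum_range (f : nat -> R) (j k : nat) : R :=
  match k with 0%nat => 0 | S k => f j + sum_range f (S j) k end.

Lemma sum_range_last (f : nat -> R) (k j : nat) : sum_range f j (S k) = sum_range f j k + f (j + k)%nat.
Proof.
  revert j; induction k as [|k IH]; intros j; simpl.
  - rewrite Nat.add_0_r; ring.
  - simpl in IH; rewrite IH; replace (S j + k)%nat with (j + S k)%nat by lia; ring.
Qed.

Lemma sum_f_R0_range (f : nat -> R) (n : nat) : sum_f_R0 f n = sum_range f 0 (S n).
Proof.
  induction n as [|n IH]; [simpl; ring|].
  rewrite (sum_range_last f (S n) 0); simpl sum_f_R0; rewrite IH; reflexivity.
Qed.

Lemma sum_range_le (f g : nat -> R) (k j : nat) :
  (forall t, (j <= t < j + k)%nat -> f t <= g t) -> sum_range f j k <= sum_range g j k.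
Proof.
  revert j; induction k as [|k IH]; intros j H; simpl; [lra|].
  pose proof (H j ltac:(lia)); pose proof (IH (S j) ltac:(intros t Ht; apply H; lia)); lra.
Qed.

Lemma sum_range_affine (f : nat -> R) (al be : R) (k j : nat) :
  sum_range (fun t => al * f t + be) j k = al * sum_range f j k + be * INR k.
Proof.
  revert j; induction k as [|k IH]; intros j; [simpl; ring|].
  cbn [sum_range]; rewrite IH, S_INR; ring.
Qed.

Fixpoint increment_nodes (i : nat -> nat) (j k : nat) : list (nat * nat) :=
  match k with
  | 0%nat => nil
  | S k => (if (i j <? i (S j))%nat then [dyadic_node (i j) (i (S j))] else nil)
           ++ increment_nodes i (S j) k
  end.

Lemma index_mono (i : nat -> nat) (j k : nat) :
  (forall t, (j <= t < j + k)%nat -> (i t <= i (S t))%nat) ->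
  forall t1 t2, (j <= t1 <= t2)%nat -> (t2 <= j + k)%nat -> (i t1 <= i t2)%nat.
Proof.
  intros H t1 t2 [H1 H2]; induction t2 as [|t2 IH]; intros H3.
  - replace t1 with 0%nat by lia; lia.
  - destruct (Nat.eq_dec t1 (S t2)) as [-> | Hn]; [lia|].
    specialize (IH ltac:(lia) ltac:(lia)); specialize (H t2 ltac:(lia)); lia.
Qed.

Lemma sum_le_increment_weight (tf : nat -> R) (i : nat -> nat) (W : nat -> nat -> R) (k j : nat) :
  (forall t, (j <= t < j + k)%nat -> (i t < i (S t))%nat ->
     tf t <= W (fst (dyadic_node (i t) (i (S t)))) (snd (dyadic_node (i t) (i (S t))))) ->
  (forall t, (j <= t < j + k)%nat -> i t = i (S t) -> tf t <= 0) ->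
  (forall t, (j <= t < j + k)%nat -> (i t <= i (S t))%nat) ->
  sum_range tf j k <= chain_weight W (increment_nodes i j k).
Proof.
  revert j; induction k as [|k IH]; intros j Hstep Htriv Hmon; simpl; [lra|].
  rewrite chain_weight_app.
  specialize (IH (S j) ltac:(intros t Ht; apply Hstep; lia) ltac:(intros t Ht; apply Htriv; lia)
                 ltac:(intros t Ht; apply Hmon; lia)).
  destruct (Nat.ltb_spec (i j) (i (S j))) as [Hlt | Hge].
  - specialize (Hstep j ltac:(lia) Hlt); destruct (dyadic_node (i j) (i (S j))) as [e c].
    simpl in *; lra.
  - specialize (Htriv j ltac:(lia) ltac:(specialize (Hmon j ltac:(lia)); lia)); simpl; lra.
Qed.

Lemma increment_nodes_chain (i : nat -> nat) (hi k j lo : nat) :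
  (lo <= i j)%nat -> (forall t, (j <= t < j + k)%nat -> (i t <= i (S t))%nat) ->
  (i (j + k) <= hi)%nat -> dyadic_chain lo hi (increment_nodes i j k).
Proof.
  revert j lo; induction k as [|k IH]; intros j lo Hlo Hmon Hhi; simpl; [auto|].
  assert (Hnext : (i (S j) <= hi)%nat).
  { pose proof (index_mono i j (S k) Hmon (S j) (j + S k) ltac:(lia) ltac:(lia)); lia. }
  replace (j + S k)%nat with (S j + k)%nat in Hhi by lia.
  destruct (Nat.ltb_spec (i j) (i (S j))) as [Hlt | Hge].
  - pose proof (dyadic_node_inside _ _ Hlt) as Hin; destruct (dyadic_node (i j) (i (S j))) as [e c].
    simpl; split; [lia | split; [lia|]].
    apply IH; [lia | intros t Ht; apply Hmon; lia | exact Hhi].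
  - simpl; pose proof (Hmon j ltac:(lia)).
    apply IH; [lia | intros t Ht; apply Hmon; lia | exact Hhi].
Qed.

Lemma grid_zygmund_of_zygmund (f : R -> R) (a u M : R) :
  (forall x h, h > 0 -> Rabs (f (x + h) - 2 * f x + f (x - h)) <= 2 * M * h) -> 0 < u ->
  grid_zygmund f a u M.
Proof.
  intros HZ Hu i k; unfold grid.
  destruct (Nat.eq_dec k 0) as [-> | Hk].
  - rewrite !Nat.add_0_r; simpl INR.
    replace (f (a + INR i * u) - 2 * f (a + INR i * u) + f (a + INR i * u)) with 0 by ring.
    rewrite Rabs_R0; lra.
  - assert (0 < INR k) by (apply lt_0_INR; lia).
    specialize (HZ (a + INR (i + k) * u) (INR k * u) ltac:(nra)).
    rewrite !plus_INR, !mult_INR in *; simpl INR in *.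
    replace (a + (INR i + INR k) * u + INR k * u) with (a + (INR i + (1 + 1) * INR k) * u) in HZ by ring.
    replace (a + (INR i + INR k) * u - INR k * u) with (a + INR i * u) in HZ by ring.
    lra.
Qed.

Definition cell_weight (f : R -> R) (a u C1 C2 mu lam : R) (K e c : nat) : R :=
  2 ^ e * u * (C1 + C2 * heat_weight mu lam (INR (K - e) + 1) (dyadic_slope f a u e c)).

Section CellWeight.

Variables (f : R -> R) (a u M C1 C2 mu lam : R) (K : nat).
Hypothesis Hu : 0 < u.
Hypothesis HZ : grid_zygmund f a u M.
Hypothesis HC1 : 0 <= C1.
Hypothesis HC2 : 0 <= C2.

Let W := cell_weight f a u C1 C2 mu lam K.

Lemma cell_weight_nonneg (e c : nat) : 0 <= W e c.
Proof.
  unfold W, cell_weight; pose proof (pow2_pos e).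
  pose proof (heat_weight_pos mu lam (INR (K - e) + 1) (dyadic_slope f a u e c)).
  apply Rmult_le_pos; nra.
Qed.

(* The heat weight is a supermartingale along the dyadic tree, so the cell weight is
   superadditive. *)
Lemma cell_weight_superadditive (e c : nat) :
  0 <= mu -> 8 * mu * (M * M) <= 1 -> mu * (M * M) <= lam -> (S e <= K)%nat ->
  W e (2 * c)%nat + W e (2 * c + 1)%nat <= W (S e) c.
Proof.
  intros Hmu HM Hlam HeK; unfold W, cell_weight.
  set (s := dyadic_slope f a u (S e) c).
  set (d := (dyadic_slope f a u e (2 * c + 1) - dyadic_slope f a u e (2 * c)) / 2).
  pose proof (slope_split f a u Hu e c) as Es; fold s in Es.
  replace (dyadic_slope f a u e (2 * c)) with (s - d) by (unfold d; rewrite Es; field).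
  replace (dyadic_slope f a u e (2 * c + 1)) with (s + d) by (unfold d; rewrite Es; field).
  assert (Hd : Rabs d <= M).
  { pose proof (slope_adjacent f a u M Hu HZ e (2 * c)) as Hadj.
    replace (S (2 * c)) with (2 * c + 1)%nat in Hadj by lia.
    unfold d, Rdiv; rewrite Rabs_mult, Rabs_inv, (Rabs_pos_eq 2) by lra; lra. }
  set (tau := INR (K - S e) + 1).
  replace (INR (K - e) + 1) with (tau + 1)
    by (unfold tau; replace (K - e)%nat with (S (K - S e)) by lia; rewrite S_INR; ring).
  assert (Htau : 1 <= tau) by (unfold tau; pose proof (pos_INR (K - S e)); lra).
  pose proof (heat_weight_supermean mu lam M tau s d Hmu HM Hlam Htau Hd) as Hsup.
  pose proof (pow2_pos e); simpl pow.
  assert (Hw : 0 <= 2 ^ e * u) by nra.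
  assert (2 ^ e * u * (C2 * (heat_weight mu lam (tau + 1) (s - d) + heat_weight mu lam (tau + 1) (s + d)))
          <= 2 ^ e * u * (C2 * (2 * heat_weight mu lam tau s)))
    by (apply Rmult_le_compat_l; [lra | apply Rmult_le_compat_l; lra]).
  nra.
Qed.

Lemma increment_le_cell_weight (Phi : R -> R) (al be : nat) :
  0 < M -> (forall s t, 0 <= s -> s <= t -> Phi s <= Phi t) ->
  (forall (n : nat) (s : R), Rabs s <= Rabs (dyadic_slope f a u K 0) + M * INR n ->
     Phi (10 * (2 ^ K * u / 2 ^ n) * (Rabs s + 14 * M))
       <= 2 ^ K * u / 2 ^ n * (C1 + C2 * heat_weight mu lam (INR n + 1) s)) ->
  (al < be)%nat -> (be <= 2 ^ K)%nat ->
  Phi (Rabs (grid f a u be - grid f a u al))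
    <= W (fst (dyadic_node al be)) (snd (dyadic_node al be)).
Proof.
  intros HM Hmono Hgen Hab HbK.
  pose proof (dyadic_node_inside al be Hab) as Hin.
  pose proof (increment_le_node f a u M Hu HZ al be ltac:(lra) Hab) as Hinc.
  destruct (dyadic_node al be) as [e c]; destruct Hin as [Hlo Hhi]; simpl.
  pose proof (pow2_pos_nat e) as He.
  assert (HeK : (e <= K)%nat).
  { destruct (Nat.le_gt_cases e K) as [|Hgt]; [assumption|].
    pose proof (Nat.pow_le_mono_r 2 (S K) e ltac:(lia) ltac:(lia)); rewrite Nat.pow_succ_r' in *; nia. }
  assert (HcK : (c + 1 <= 2 ^ (K - e))%nat).
  { rewrite <- (Nat.sub_add e K HeK), Nat.pow_add_r in HbK.
    apply (Nat.mul_le_mono_pos_r _ _ (2 ^ e)); lia. }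
  pose proof (slope_root_bound f a u M Hu HZ (K - e) e c HcK) as Hroot.
  replace (e + (K - e))%nat with K in Hroot by lia.
  specialize (Hgen (K - e)%nat (dyadic_slope f a u e c) Hroot).
  replace (2 ^ K * u / 2 ^ (K - e)) with (2 ^ e * u) in Hgen
    by (rewrite <- (Nat.sub_add e K HeK) at 1; rewrite pow_add; field; repeat split; apply pow_nonzero; lra).
  eapply Rle_trans; [|exact Hgen].
  apply Hmono; [apply Rabs_pos | exact Hinc].
Qed.

End CellWeight.

Lemma grid_variation_bound (h : R -> R) (M a b q : R) (Phi : R -> R) :
  (forall x t, t > 0 -> Rabs (h (x + t) - 2 * h x + h (x - t)) <= 2 * M * t) ->
  M > 0 -> a < b -> q > 1 / 2 -> is_Phi_q q Phi ->
  exists C, forall (K N : nat) (i : nat -> nat),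
    i 0%nat = 0%nat -> i N = (2 ^ K)%nat -> (forall t, (t < N)%nat -> (i t <= i (S t))%nat) ->
    sum_range (fun j => Phi (Rabs (grid h a ((b - a) / 2 ^ K) (i (S j))
                                   - grid h a ((b - a) / 2 ^ K) (i j)))) 0 N <= C.
Proof.
  intros HZ HM Hab Hq HP.
  set (L := b - a); assert (HL : 0 < L) by (unfold L; lra).
  set (sK := (h b - h a) / L).
  destruct (Phi_dyadic_bound q L M (Rabs sK) Phi Hq HP HL HM (Rabs_pos sK)) as [C1 [C2 [HC1 [HC2 Hgen]]]].
  set (lam := Rmin (1 / 8) (2 * q - 1)) in *; set (mu := lam / (M * M)) in *.
  assert (Hlam : 0 < lam <= 1 / 8) by (unfold lam; split; [apply Rmin_glb_lt | apply Rmin_l]; lra).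
  assert (HmuM : mu * (M * M) = lam) by (unfold mu; field; lra).
  assert (Hmu : 0 <= mu) by (unfold mu; apply Rdiv_nonneg; nra).
  exists (L * (C1 + C2 * heat_weight mu lam 1 sK)).
  intros K N i Hi0 HiN Hmon.
  set (u := (b - a) / 2 ^ K); pose proof (pow2_pos K).
  assert (Hu : 0 < u) by (apply Rdiv_lt_0_compat; lra).
  assert (HuK : 2 ^ K * u = L) by (unfold u, L; field; lra).
  pose proof (grid_zygmund_of_zygmund h a u M HZ Hu) as HZG.
  assert (HsK : dyadic_slope h a u K 0 = sK).
  { unfold dyadic_slope, grid, sK; rewrite HuK.
    replace (INR ((0 + 1) * 2 ^ K)) with (2 ^ K) by (rewrite Nat.mul_1_l, INR_pow2; reflexivity).
    replace (a + 2 ^ K * u) with b by (unfold L in HuK; lra).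
    simpl INR; replace (a + 0 * u) with a by ring; reflexivity. }
  rewrite <- HsK, <- HuK in Hgen.
  set (W := cell_weight h a u C1 C2 mu lam K).
  apply Rle_trans with (chain_weight W (increment_nodes i 0 N)).
  - apply sum_le_increment_weight; try (intros t Ht; apply Hmon; lia).
    + intros t Ht Hlt; apply (increment_le_cell_weight h a u M C1 C2 mu lam K Hu HZG Phi _ _ HM);
        [apply HP | exact Hgen | exact Hlt|].
      rewrite <- HiN; apply (index_mono i 0 N (fun t Ht => Hmon t ltac:(lia))); lia.
    + intros t _ ->; rewrite Rminus_diag, Rabs_R0, (Phi_zero q Phi HP ltac:(lra)); lra.
  - replace (L * (C1 + C2 * heat_weight mu lam 1 sK)) with (W K 0%nat)
      by (unfold W, cell_weight; rewrite Nat.sub_diag, HsK, HuK; simpl INR; rewrite Rplus_0_l; reflexivity).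
    apply (chain_weight_le_cell W K).
    + apply cell_weight_nonneg; assumption.
    + intros e c HeK; apply (cell_weight_superadditive h a u M); try assumption; nra.
    + lia.
    + apply increment_nodes_chain; [simpl; lia | intros t Ht; apply Hmon; lia | rewrite Nat.add_0_l, HiN; lia].
Qed.

Definition nat_floor (z : R) : nat := Z.to_nat (up z - 1).

Lemma nat_floor_spec (z : R) : 0 <= z -> INR (nat_floor z) <= z < INR (nat_floor z) + 1.
Proof.
  intros Hz; unfold nat_floor; destruct (archimed z) as [H1 H2].
  assert (Hpos : (0 < up z)%Z) by (apply lt_IZR; simpl; lra).
  rewrite INR_IZR_INZ, Z2Nat.id by lia; rewrite minus_IZR; simpl; lra.
Qed.

Lemma nat_floor_unique (z : R) (k : nat) : INR k <= z < INR k + 1 -> nat_floor z = k.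
Proof.
  intros [H1 H2]; pose proof (pos_INR k).
  destruct (nat_floor_spec z ltac:(lra)) as [A B].
  assert (nat_floor z < k + 1)%nat by (apply INR_lt; rewrite plus_INR; simpl; lra).
  assert (k < nat_floor z + 1)%nat by (apply INR_lt; rewrite plus_INR; simpl; lra).
  lia.
Qed.

Lemma nat_floor_mono (z1 z2 : R) : 0 <= z1 -> z1 <= z2 -> (nat_floor z1 <= nat_floor z2)%nat.
Proof.
  intros H1 H2; destruct (nat_floor_spec z1 H1); destruct (nat_floor_spec z2 ltac:(lra)).
  assert (nat_floor z1 < nat_floor z2 + 1)%nat by (apply INR_lt; rewrite plus_INR; simpl; lra).
  lia.
Qed.

Lemma INR_lt_pow2 (n : nat) : INR n < 2 ^ n.
Proof.
  induction n as [|n IH]; [simpl; lra|]; rewrite S_INR.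
  replace (2 ^ S n) with (2 * 2 ^ n) by reflexivity; pose proof (pow_R1_Rle 2 n ltac:(lra)); lra.
Qed.

Lemma continuity_pt_eps (g : R -> R) (x0 eps : R) : continuity_pt g x0 -> eps > 0 ->
  exists al, al > 0 /\ forall y, Rabs (y - x0) < al -> Rabs (g y - g x0) < eps.
Proof.
  intros Hc He; destruct (Hc eps He) as [al [Hal H]]; exists al; split; [exact Hal|].
  intros y Hy; destruct (Req_dec y x0) as [-> | Hn].
  - rewrite Rminus_diag, Rabs_R0; lra.
  - apply (H y); split; [split; [exact I | auto] | exact Hy].
Qed.

Lemma continuity_finite_points (g : R -> R) (x : nat -> R) (eta : R) : continuity g -> eta > 0 ->
  forall n, exists al, al > 0 /\
    forall t, (t <= n)%nat -> forall y, Rabs (y - x t) < al -> Rabs (g y - g (x t)) < eta.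
Proof.
  intros Hc He; induction n as [|n IH].
  - destruct (continuity_pt_eps g (x 0%nat) eta (Hc _) He) as [al [Hal H]].
    exists al; split; [exact Hal|]; intros t Ht; replace t with 0%nat by lia; exact H.
  - destruct IH as [a1 [Ha1 H1]]; destruct (continuity_pt_eps g (x (S n)) eta (Hc _) He) as [a2 [Ha2 H2]].
    exists (Rmin a1 a2); split; [apply Rmin_glb_lt; lra|].
    intros t Ht y Hy; pose proof (Rmin_l a1 a2); pose proof (Rmin_r a1 a2).
    destruct (Nat.eq_dec t (S n)) as [-> | Hn]; [apply H2; lra | apply H1; [lia | lra]].
Qed.

Lemma partition_mono (a b : R) (N : nat) (x : nat -> R) : is_partition a b N x ->
  forall t, (t <= N)%nat -> a <= x t <= b.
Proof.
  intros [_ [Hx0 [HxN Hinc]]].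
  assert (Hmono : forall t1 t2, (t1 <= t2 <= N)%nat -> x t1 <= x t2).
  { intros t1 t2 Ht; induction t2 as [|t2 IH].
    - replace t1 with 0%nat by lia; lra.
    - destruct (Nat.eq_dec t1 (S t2)) as [-> | Hn]; [lra|].
      specialize (IH ltac:(lia)); specialize (Hinc t2 ltac:(lia)); lra. }
  intros t Ht; rewrite <- Hx0, <- HxN; split; apply Hmono; lia.
Qed.

Lemma grid_snap (g : R -> R) (a b eta : R) (N : nat) (x : nat -> R) :
  continuity g -> eta > 0 -> a < b -> is_partition a b N x ->
  exists (K : nat) (i : nat -> nat),
    i 0%nat = 0%nat /\ i N = (2 ^ K)%nat /\ (forall t, (t < N)%nat -> (i t <= i (S t))%nat) /\
    forall t, (t <= N)%nat -> Rabs (g (a + INR (i t) * ((b - a) / 2 ^ K)) - g (x t)) < eta.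
Proof.
  intros Hcont Heta Hab Hpart; pose proof (partition_mono a b N x Hpart) as Hrange.
  destruct Hpart as [_ [Hx0 [HxN Hinc]]].
  destruct (continuity_finite_points g x eta Hcont Heta N) as [al [Hal Hclose]].
  destruct (INR_archimed 1 ((b - a) / al) ltac:(lra)) as [K HK]; rewrite Rmult_1_r in HK.
  pose proof (INR_lt_pow2 K); pose proof (pow2_pos K).
  set (u := (b - a) / 2 ^ K).
  assert (Hu : 0 < u) by (apply Rdiv_lt_0_compat; lra).
  assert (Hual : u < al).
  { unfold u; apply (Rmult_lt_reg_r (2 ^ K / al)); [apply Rdiv_lt_0_compat; lra|].
    replace ((b - a) / 2 ^ K * (2 ^ K / al)) with ((b - a) / al) by (field; lra).
    replace (al * (2 ^ K / al)) with (2 ^ K) by (field; lra); lra. }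
  set (z := fun t => (x t - a) / u).
  assert (Hz : forall t, (t <= N)%nat -> 0 <= z t)
    by (intros t Ht; apply Rdiv_nonneg; [pose proof (Hrange t Ht) |]; lra).
  exists K, (fun t => nat_floor (z t)); repeat split.
  - apply nat_floor_unique; unfold z; rewrite Hx0; replace ((a - a) / u) with 0 by (field; lra); simpl; lra.
  - apply nat_floor_unique; unfold z, u; rewrite HxN, INR_pow2.
    replace ((b - a) / ((b - a) / 2 ^ K)) with (2 ^ K) by (field; lra); lra.
  - intros t Ht; apply nat_floor_mono; [apply Hz; lia|].
    apply Rmult_le_compat_r; [left; apply Rinv_0_lt_compat; lra | pose proof (Hinc t Ht); lra].
  - intros t Ht; apply Hclose; [exact Ht|]; fold u.
    destruct (nat_floor_spec _ (Hz t Ht)) as [Hlo Hhi]; unfold z in Hlo, Hhi.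
    apply (Rmult_le_compat_r u) in Hlo; apply (Rmult_lt_compat_r u) in Hhi; try lra.
    replace ((x t - a) / u * u) with (x t - a) in Hlo, Hhi by (field; lra).
    fold (z t) in Hlo, Hhi; rewrite Rabs_left1; lra.
Qed.

Lemma Phi_var_sum_range (Phi v : R -> R) (N : nat) (x : nat -> R) : (1 <= N)%nat ->
  Phi_var_sum Phi v N x = sum_range (fun j => Phi (Rabs (v (x (S j)) - v (x j)))) 0 N.
Proof.
  intros HN; unfold Phi_var_sum; rewrite sum_f_R0_range; f_equal; lia.
Qed.

(* Moving both endpoints of an increment by less than [eta] costs, by convexity, at most
   the average of [Phi] at the doubled increment and at [4 eta]. *)
Lemma Phi_perturbed_step (q : R) (Phi : R -> R) (A0 A1 B0 B1 eta : R) : is_Phi_q q Phi ->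
  Rabs (B0 - A0) < eta -> Rabs (B1 - A1) < eta ->
  Phi (Rabs (A1 - A0)) <= / 2 * Phi (Rabs (2 * B1 - 2 * B0)) + / 2 * Phi (4 * eta).
Proof.
  intros [_ [Hmono [Hconv _]]] H0 H1.
  assert (Htri : Rabs (A1 - A0) <= Rabs (B1 - B0) + 2 * eta).
  { replace (A1 - A0) with ((A1 - B1) + (B1 - B0) + (B0 - A0)) by ring.
    pose proof (Rabs_triang (A1 - B1 + (B1 - B0)) (B0 - A0)); pose proof (Rabs_triang (A1 - B1) (B1 - B0)).
    rewrite Rabs_minus_sym in H1; lra. }
  replace (2 * B1 - 2 * B0) with (2 * (B1 - B0)) by ring.
  rewrite Rabs_mult, (Rabs_pos_eq 2) by lra.
  pose proof (Rabs_pos (B1 - B0)); pose proof (Rabs_pos (B0 - A0)).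
  eapply Rle_trans; [apply Hmono; [apply Rabs_pos | exact Htri]|].
  pose proof (Hconv (2 * Rabs (B1 - B0)) (4 * eta) (/ 2) ltac:(lra) ltac:(lra) ltac:(lra)) as Hc.
  replace (/ 2 * (2 * Rabs (B1 - B0)) + (1 - / 2) * (4 * eta)) with (Rabs (B1 - B0) + 2 * eta) in Hc by field.
  replace (1 - / 2) with (/ 2) in Hc by field; exact Hc.
Qed.

Lemma zygmund_scale (g : R -> R) (M k : R) : 0 <= k ->
  (forall x h, h > 0 -> Rabs (g (x + h) - 2 * g x + g (x - h)) <= 2 * M * h) ->
  forall x t, t > 0 -> Rabs (k * g (x + t) - 2 * (k * g x) + k * g (x - t)) <= 2 * (k * M) * t.
Proof.
  intros Hk Hz x t Ht; replace (k * g (x + t) - 2 * (k * g x) + k * g (x - t))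
    with (k * (g (x + t) - 2 * g x + g (x - t))) by ring.
  rewrite Rabs_mult, (Rabs_pos_eq k) by lra; pose proof (Hz x t Ht).
  replace (2 * (k * M) * t) with (k * (2 * M * t)) by ring; apply Rmult_le_compat_l; lra.
Qed.

Lemma Phi_small_cost (q : R) (Phi : R -> R) (N : nat) : is_Phi_q q Phi -> 0 <= q -> (1 <= N)%nat ->
  exists eta, 0 < eta /\ Phi (4 * eta) * INR N <= 1.
Proof.
  intros HP Hq HN; apply (le_INR 1) in HN; simpl in HN.
  destruct (Phi_le_id_near0 q Phi HP Hq) as [d [Hd Hsmall]].
  exists (Rmin (d / 8) (/ (4 * INR N))).
  set (eta := Rmin (d / 8) (/ (4 * INR N))).
  assert (Heta : 0 < eta) by (apply Rmin_glb_lt; [lra | apply Rinv_0_lt_compat; lra]).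
  pose proof (Rmin_l (d / 8) (/ (4 * INR N))) as Hd8; pose proof (Rmin_r (d / 8) (/ (4 * INR N))) as Hinv.
  fold eta in Hd8, Hinv; split; [exact Heta|].
  assert (4 * eta * INR N <= 1).
  { apply (Rmult_le_compat_r (4 * INR N)) in Hinv; [|lra]; rewrite Rinv_l in Hinv by lra; lra. }
  pose proof (Hsmall (4 * eta) ltac:(lra)); pose proof (proj1 HP (4 * eta) ltac:(lra)); nra.
Qed.

(* Main theorem: snap an arbitrary partition to a fine grid (errors [< eta] on the
   values of [g]), pay [Phi (4 eta)] per step for the snapping, and apply the grid bound
   to [2 g], a Zygmund function with constant [2 M]. *)
Theorem proposition6p1 :
  forall (g : R -> R), zygmund g ->
  forall (q : R), q > 1 / 2 ->
  forall (Phi : R -> R), is_Phi_q q Phi ->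
  loc_finite_Phi_variation Phi g.
Proof.
  intros g [Hcont [M [HM Hz]]] q Hq Phi HP a b Hab.
  destruct (grid_variation_bound (fun x => 2 * g x) (2 * M) a b q Phi (zygmund_scale g M 2 ltac:(lra) Hz)
              ltac:(lra) Hab Hq HP) as [C HC].
  exists (C / 2 + 1 / 2); intros N x Hpart.
  destruct (Phi_small_cost q Phi N HP ltac:(lra) ltac:(apply Hpart)) as [eta [Heta Hcost]].
  destruct (grid_snap g a b eta N x Hcont ltac:(lra) Hab Hpart) as [K [i [Hi0 [HiN [Hmon Hclose]]]]].
  rewrite Phi_var_sum_range by apply Hpart.
  set (u := (b - a) / 2 ^ K) in *; set (h := fun y => 2 * g y) in HC.
  apply Rle_trans with
    (sum_range (fun t => / 2 * Phi (Rabs (grid h a u (i (S t)) - grid h a u (i t))) + / 2 * Phi (4 * eta)) 0 N).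
  { apply sum_range_le; intros t Ht.
    apply (Phi_perturbed_step q Phi _ _ _ _ eta HP); apply Hclose; lia. }
  rewrite sum_range_affine; pose proof (HC K N i Hi0 HiN Hmon) as Hgrid; fold u in Hgrid; lra.
Qed.
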